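(* Let $F$ be an algebraically closed field of characteristic $\neq 2$, let $R=F[t]$ with the involution ${}^*$ described in the context, and let $A\in M_2(R)$ satisfy $A^*=A$, $\det(A)\neq 0$ and $\gcd(A)=1$. Then $A$ is congruent to the diagonal matrix $\mathrm{diag}(1,\det(A))$, i.e. there is $S\in \mathrm{GL}_2(R)$ with $S^*AS=\mathrm{diag}(1,\det(A))$.
   Context: $R=F[t]$ is the polynomial ring over $F$, and ${}^*$ is the $F$-algebra involution of $R$ that is the identity on $F$ and sends $t$ to $-t$. For $A=(a_{ij})\in M_n(R)$, $A^*$ is the matrix whose $(i,j)$ entry is $a_{ji}^*$. $A$ is hermitian if $A^*=A$ and skew-hermitian if $A^*=-A$. Two such matrices $A,B$ are congruent if $B=S^*AS$ for some $S\in\mathrm{GL}_n(R)$. For a hermitian or skew-hermitian $A$, $\gcd(A)$ denotes the monic generator (or $0$) of the ideal of $R$ generated by all entries of $A$. *)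

From HB Require Import structures.
From mathcomp Require Import all_boot all_order all_algebra all_field.
Set Implicit Arguments. Unset Strict Implicit. Unset Printing Implicit Defensive.
Import GRing.Theory.
Local Open Scope ring_scope.

Definition pstar (F : fieldType) (p : {poly F}) : {poly F} := p \Po (- 'X).

Definition mxstar (F : fieldType) (m n : nat) (A : 'M[{poly F}]_(m, n))
  : 'M[{poly F}]_(n, m) := \matrix_(i, j) pstar (A j i).

(* gcd(A) = 1: the ideal of F[t] generated by the entries of A is all of F[t]. *)
Definition entries_gcd1 (F : fieldType) (m n : nat) (A : 'M[{poly F}]_(m, n)) : Prop :=
  exists C : 'M[{poly F}]_(m, n), \sum_(i < m) \sum_(j < n) C i j * A i j = 1.

(* A polynomial fixed by [*] is even, e = E(t^2), and over an algebraically
   closed field E(t^2) factors into terms t^2 - s^2 = (i (t - s)) (i (t - s))^*;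
   so e = y y^*, with y and y^* coprime when e(0) <> 0.  Write the form of A
   as [a, b; b^*, d].  Since -det A = h h^*, the vector (h - b, a) is
   isotropic; dividing by a gcd gives a primitive isotropic v1, completed to a
   basis (v1, v2) with Gram matrix [0, be; be^*, de] and be be^* = -det A.
   Replacing v2 by c v1 + v2 for a suitable constant c makes de coprime to
   be be^*: where be and be^* both vanish, de cannot, because gcd(A) = 1.
   Then e de + f be be^* = 1 with e, f even, e = y y^* and f = y z + (y z)^*,
   and the vector be z^* v1 + y v2 has norm 1.  A vector of norm 1 extends to
   a basis whose second vector is orthogonal to it and has norm det A. *)

From HB Require Import structures.
From mathcomp Require Import all_boot all_order all_algebra all_field.
From mathcomp Require Import ring.
Set Implicit Arguments.
Unset Strict Implicit.
Unset Printing Implicit Defensive.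
Import GRing.Theory.
Local Open Scope ring_scope.

HB.instance Definition _ (F : fieldType) :=
  GRing.isNmodMorphism.Build _ _ (@pstar F)
    (conj (comp_poly0 _) (fun p q => comp_polyD p q _)).
HB.instance Definition _ (F : fieldType) :=
  GRing.isMonoidMorphism.Build _ _ (@pstar F) (comp_poly_is_monoid_morphism _).

Section Involution.
Variable F : fieldType.
Implicit Types p q : {poly F}.

Lemma pstarD p q : pstar (p + q) = pstar p + pstar q. Proof. exact: rmorphD. Qed.
Lemma pstarN p : pstar (- p) = - pstar p. Proof. exact: rmorphN. Qed.
Lemma pstarB p q : pstar (p - q) = pstar p - pstar q. Proof. exact: rmorphB. Qed.
Lemma pstarM p q : pstar (p * q) = pstar p * pstar q. Proof. exact: rmorphM. Qed.
Lemma pstar1 : pstar 1 = 1 :> {poly F}. Proof. exact: rmorph1. Qed.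
Lemma pstarC (c : F) : pstar c%:P = c%:P. Proof. exact: comp_polyC. Qed.
Lemma pstarX : pstar 'X = - 'X :> {poly F}. Proof. exact: comp_polyX. Qed.

Lemma pstarK : involutive (@pstar F).
Proof. by move=> p; rewrite /pstar -comp_polyA raddfN /= comp_polyX opprK comp_polyXr. Qed.

Lemma pstar_eq0 p : (pstar p == 0) = (p == 0).
Proof. by rewrite (inv_eq pstarK) rmorph0. Qed.

Lemma horner_pstar p x : (pstar p).[x] = p.[- x].
Proof. by rewrite /pstar horner_comp hornerN hornerX. Qed.

Lemma pstar_even_odd p :
  pstar p = even_poly p \Po 'X^2 - (odd_poly p \Po 'X^2) * 'X.
Proof.
rewrite -{1}(poly_even_odd p) pstarD pstarM pstarX /pstar -!comp_polyA.
by rewrite comp_Xn_poly sqrrN mulrN.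
Qed.

Lemma norm_XsubC (i s : F) : i ^+ 2 = -1 ->
  i%:P * ('X - s%:P) * pstar (i%:P * ('X - s%:P)) = 'X^2 - (s ^+ 2)%:P.
Proof.
move=> i2; rewrite pstarM pstarB pstarX !pstarC.
have -> : i%:P * ('X - s%:P) * (i%:P * (- 'X - s%:P)) = (i ^+ 2)%:P * ((s ^+ 2)%:P - 'X^2).
  by rewrite !polyC_exp; ring.
by rewrite i2 polyCN mulN1r opprB.
Qed.

End Involution.

Ltac pstar_simpl :=
  rewrite ?(pstarD, pstarB, pstarN, pstarM, pstar1, pstarC, pstarX, pstarK).

Section HermitianForm.
Variable F : fieldType.
Variables a b d : {poly F}.
Implicit Types x y X Y : {poly F}.

(* [hform x1 y1 x2 y2] is (x1, y1)^* M (x2, y2) for M = [a, b; b^*, d]. *)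
Definition hform x1 y1 x2 y2 :=
  pstar x1 * a * x2 + pstar x1 * b * y2 + pstar y1 * pstar b * x2 + pstar y1 * d * y2.

Hypotheses (sym_a : pstar a = a) (sym_d : pstar d = d).

Lemma hformC x1 y1 x2 y2 : hform x2 y2 x1 y1 = pstar (hform x1 y1 x2 y2).
Proof. by rewrite /hform; pstar_simpl; rewrite sym_a sym_d; ring. Qed.

Lemma hform_expand x1 y1 x2 y2 X Y X' Y' :
  hform (X * x1 + Y * x2) (X * y1 + Y * y2) (X' * x1 + Y' * x2) (X' * y1 + Y' * y2)
  = pstar X * X' * hform x1 y1 x1 y1 + pstar X * Y' * hform x1 y1 x2 y2
    + pstar Y * X' * hform x2 y2 x1 y1 + pstar Y * Y' * hform x2 y2 x2 y2.
Proof. by rewrite /hform; pstar_simpl; ring. Qed.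

Lemma hform_mulr x1 y1 x2 y2 X X' :
  hform (x1 * X) (y1 * X) (x2 * X') (y2 * X') = pstar X * X' * hform x1 y1 x2 y2.
Proof. by rewrite /hform; pstar_simpl; ring. Qed.

Lemma hform_gram_det x1 y1 x2 y2 :
  hform x1 y1 x1 y1 * hform x2 y2 x2 y2 - hform x1 y1 x2 y2 * hform x2 y2 x1 y1
  = pstar (x1 * y2 - y1 * x2) * (x1 * y2 - y1 * x2) * (a * d - b * pstar b).
Proof. by rewrite /hform; pstar_simpl; ring. Qed.

Lemma hform_basis_roots x1 y1 x2 y2 z : x1 * y2 - y1 * x2 = 1 ->
    (hform x1 y1 x1 y1).[z] = 0 -> (hform x1 y1 x2 y2).[z] = 0 ->
    (hform x2 y2 x1 y1).[z] = 0 -> (hform x2 y2 x2 y2).[z] = 0 ->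
  [/\ a.[z] = 0, b.[z] = 0, (pstar b).[z] = 0 & d.[z] = 0].
Proof.
move=> det1 h11 h12 h21 h22.
have vanish X Y X' Y' :
    (hform (X * x1 + Y * x2) (X * y1 + Y * y2) (X' * x1 + Y' * x2) (X' * y1 + Y' * y2)).[z] = 0.
  by rewrite hform_expand !hornerD !hornerM h11 h12 h21 h22 !mulr0 !addr0.
have e1 : y2 * x1 + (- y1) * x2 = 1 by rewrite -det1; ring.
have e2 : (- x2) * y1 + x1 * y2 = 1 by rewrite -det1; ring.
have e0 : y2 * y1 + (- y1) * y2 = 0 by ring.
have e0' : (- x2) * x1 + x1 * x2 = 0 by ring.
have := vanish y2 (- y1) y2 (- y1); have := vanish y2 (- y1) (- x2) x1.
have := vanish (- x2) x1 y2 (- y1); have := vanish (- x2) x1 (- x2) x1.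
rewrite e1 e2 e0 e0' /hform; pstar_simpl.
rewrite rmorph0 !(mul0r, mulr0, mul1r, mulr1, addr0, add0r).
by move=> -> -> -> ->.
Qed.

Lemma hform_orthogonal_complement p r : hform p r p r = 1 ->
  exists w1 w2, [/\ p * w2 - w1 * r = 1, hform p r w1 w2 = 0
                   & hform w1 w2 w1 w2 = a * d - b * pstar b].
Proof.
move=> pr1.
pose w1 := - (pstar p * b + pstar r * d); pose w2 := pstar p * a + pstar r * pstar b.
have det1 : p * w2 - w1 * r = 1 by rewrite -pr1 /w1 /w2 /hform; ring.
have orth : hform p r w1 w2 = 0 by rewrite /w1 /w2 /hform; pstar_simpl; ring.
exists w1, w2; split=> //; have := hform_gram_det p r w1 w2.
by rewrite pr1 orth [r * w1]mulrC det1 pstar1 !mul1r mul0r subr0.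
Qed.

End HermitianForm.

Section ClosedField.
Variable F : closedFieldType.
Hypothesis two_neq0 : 2%:R != 0 :> F.
Implicit Types b d e f p q y : {poly F}.

Lemma closed_sqrt (c : F) : exists s, s ^+ 2 = c.
Proof.
have /closed_rootP [s] : size ('X^2 - c%:P : {poly F}) != 1 by rewrite size_XnsubC.
by rewrite rootE !hornerE subr_eq0 => /eqP; exists s.
Qed.

Lemma closed_exists_notin (s : seq F) : exists c, c \notin s.
Proof.
have /closed_nonrootP [c] : \prod_(z <- s) ('X - z%:P) != 0 :> {poly F}.
  exact/monic_neq0/monic_prod_XsubC.
by rewrite root_prod_XsubC; exists c.
Qed.

Lemma sym_polyE e : pstar e = e -> e = even_poly e \Po 'X^2.
Proof.
move=> sym_e; apply: (@mulIf _ 2%:R); first by rewrite -polyC_natr polyC_eq0.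
have e_sum : e + pstar e = (even_poly e \Po 'X^2) *+ 2.
  by rewrite pstar_even_odd -{1}(poly_even_odd e) addrACA subrr addr0.
by rewrite !mulr_natr -e_sum sym_e.
Qed.

Lemma sym_poly_norm e : pstar e = e ->
  exists y, y * pstar y = e /\ (e.[0] != 0 -> coprimep y (pstar y)).
Proof.
move=> sym_e; set E := even_poly e.
have eE : e = E \Po 'X^2 by exact: sym_polyE.
have [rs] := closed_field_poly_normal E; set l := lead_coef E => Ers.
have [i i2] := closed_sqrt (-1).
have [c c2] := closed_sqrt l.
have sqrt_ex (r : F) : exists s, s ^+ 2 == r by have [s <-] := closed_sqrt r; exists s.
pose sq r := xchoose (sqrt_ex r).
have sqK r : sq r ^+ 2 = r := eqP (xchooseP (sqrt_ex r)).
pose f r : {poly F} := i%:P * ('X - (sq r)%:P).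
have f_norm r : f r * pstar (f r) = 'X^2 - r%:P by rewrite norm_XsubC // sqK.
exists (c%:P * \prod_(r <- rs) f r); split.
  rewrite pstarM pstarC rmorph_prod /= mulrACA -big_split /= -polyCM -expr2 c2.
  rewrite (eq_bigr _ (fun r _ => f_norm r)) eE Ers comp_polyZ rmorph_prod /=.
  rewrite -mul_polyC; congr (_ * _); apply: eq_bigr => r _.
  by rewrite comp_polyB comp_polyX comp_polyC.
rewrite {1}eE horner_comp !hornerE expr0n /= => E0_neq0.
have i_neq0 : i != 0 by apply: contra_eq_neq i2 => ->; rewrite expr0n eq_sym oppr_eq0 oner_eq0.
have root_y x : root (c%:P * \prod_(r <- rs) f r) x -> exists2 r, r \in rs & x = sq r.
  rewrite rootE hornerM horner_prod mulf_eq0 hornerC prodf_seq_eq0 => /orP [/eqP c0|].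
    by move: E0_neq0; rewrite Ers -c2 c0 expr0n scale0r horner0 eqxx.
  case/hasP => r rs_r; rewrite /f !hornerE mulf_eq0 (negbTE i_neq0) subr_eq0 => /eqP ->.
  by exists r.
apply/Pdiv.ClosedField.coprimepP => x /root_y [r1 rs_r1 ->].
rewrite horner_pstar -rootE; apply/negP => /root_y [r2 rs_r2 sq12].
have r21 : r2 = r1 by rewrite -(sqK r2) -sq12 sqrrN sqK.
have sq0 : sq r1 = 0.
  have : sq r1 * 2%:R = 0 by rewrite mulr_natr mulr2n -{2}[sq r1]opprK sq12 r21 subrr.
  by move/eqP; rewrite mulf_eq0 (negbTE two_neq0) orbF => /eqP.
move: E0_neq0; rewrite Ers hornerZ.
have r1_0 : r1 = 0 by rewrite -(sqK r1) sq0 expr0n.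
suff /eqP -> : root (\prod_(z <- rs) ('X - z%:P)) 0 by rewrite mulr0 eqxx.
by rewrite root_prod_XsubC -r1_0.
Qed.

Let half : {poly F} := (2%:R^-1)%:P.

Lemma half_mul2 : half * 2%:R = 1.
Proof. by rewrite -polyC_natr -polyCM mulVf. Qed.

Lemma sym_bezout p q : pstar p = p -> pstar q = q -> coprimep p q ->
  exists e f, [/\ pstar e = e, pstar f = f, e * p + f * q = 1 & e.[0] != 0].
Proof.
move=> sym_p sym_q /Bezout_eq1_coprimepP [[u v] /= uv1].
have uv1' : pstar u * p + pstar v * q = 1.
  by rewrite -sym_p -sym_q -!pstarM -pstarD uv1 pstar1.
pose e : {poly F} := half * (u + pstar u).
pose f : {poly F} := half * (v + pstar v).
have sym_e : pstar e = e by rewrite /e; pstar_simpl; ring.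
have sym_f : pstar f = f by rewrite /f; pstar_simpl; ring.
have ef1 : e * p + f * q = 1.
  have -> : e * p + f * q = half * ((u * p + v * q) + (pstar u * p + pstar v * q))
    by rewrite /e /f; ring.
  by rewrite uv1 uv1' -mulr2n half_mul2.
clearbody e f; have [e0 | ] := eqVneq e.[0] 0; last by exists e, f.
exists (e + q), (f - p); split; first by rewrite pstarD sym_e sym_q.
- by rewrite pstarB sym_f sym_p.
- by rewrite -ef1; ring.
apply: contra_eq_neq (congr1 (horner^~ 0) ef1) => /eqP.
rewrite hornerD e0 add0r => /eqP q0.
by rewrite hornerD !hornerM e0 q0 mul0r mulr0 addr0 hornerC eq_sym oner_neq0.
Qed.

Lemma sym_trace_surj y f : coprimep y (pstar y) -> pstar f = f ->
  exists z, y * z + pstar (y * z) = f.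
Proof.
move=> /Bezout_eq1_coprimepP [[u v] /= uv1] sym_f.
exists (half * f * (u + pstar v)).
have -> : y * (half * f * (u + pstar v)) + pstar (y * (half * f * (u + pstar v)))
    = half * f * ((u * y + v * pstar y) + pstar (u * y + v * pstar y)).
  by pstar_simpl; rewrite sym_f; ring.
by rewrite uv1 pstar1 -mulr2n mulrAC half_mul2 mul1r.
Qed.

Lemma exists_shift_coprime b d : b * pstar b != 0 ->
    (forall x, root b x -> root (pstar b) x -> ~~ root d x) ->
  exists c : F, coprimep (c%:P * (b + pstar b) + d) (b * pstar b).
Proof.
move=> Nb_neq0 no_common_root.
have [rs Nrs] := closed_field_poly_normal (b * pstar b).
have [c c_notin] := closed_exists_notin [seq - d.[x] / (b + pstar b).[x] | x <- rs].
exists c; apply/Pdiv.ClosedField.coprimepP => x; apply: contraTN => /eqP Nx0.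
have x_rs : x \in rs.
  have lead_neq0 : lead_coef (b * pstar b) != 0 by rewrite lead_coef_eq0.
  by rewrite -root_prod_XsubC -(rootZ _ _ lead_neq0) -Nrs rootE Nx0.
rewrite rootE !hornerE.
have [s0 | s_neq0] := eqVneq (b.[x] + (pstar b).[x]) 0.
  have [bx0 b'x0] : root b x /\ root (pstar b) x.
    move: Nx0 s0; rewrite hornerM !rootE => /eqP; rewrite mulf_eq0.
    by case/orP => /eqP ->; rewrite ?add0r ?addr0 => ->.
  by rewrite s0 mulr0 add0r -rootE no_common_root.
apply: contra c_notin => /eqP cd0; apply/mapP; exists x => //.
rewrite hornerD; apply: (mulIf s_neq0); rewrite divfK //.
by apply/eqP; rewrite -subr_eq0 opprK cd0.
Qed.

Section Representation.
Variables a b d : {poly F}.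
Hypotheses (sym_a : pstar a = a) (sym_d : pstar d = d).
Local Notation hf := (hform a b d).
Let hfC := hformC b sym_a sym_d.

Lemma exists_primitive_isotropic :
  exists x y k l, hf x y x y = 0 /\ x * k + y * l = 1.
Proof.
have [a0 | a_neq0] := eqVneq a 0.
  exists 1, 0, 1, 0; split; last by rewrite mulr1 mulr0 addr0.
  by rewrite /hform a0; pstar_simpl; rewrite rmorph0; ring.
have sym_ND : pstar (b * pstar b - a * d) = b * pstar b - a * d.
  by pstar_simpl; rewrite sym_a sym_d; ring.
have [h [hh _]] := sym_poly_norm sym_ND.
have iso : hf (h - b) a (h - b) a = 0.
  have -> : hf (h - b) a (h - b) a = a * (pstar h * h - (b * pstar b - a * d)).
    by rewrite /hform; pstar_simpl; rewrite sym_a; ring.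
  by rewrite -hh [h * _]mulrC subrr mulr0.
pose g := gcdp (h - b) a.
have g_neq0 : g != 0 by rewrite gcdp_eq0 negb_and a_neq0 orbT.
have /Bezout_eq1_coprimepP [[k l] /= kl1] : coprimep ((h - b) %/ g) (a %/ g).
  by apply: coprimep_div_gcd; rewrite a_neq0 orbT.
exists ((h - b) %/ g), (a %/ g), k, l; split; last by rewrite -kl1 mulrC [_ * l]mulrC.
have := hform_mulr a b d ((h - b) %/ g) (a %/ g) ((h - b) %/ g) (a %/ g) g g.
rewrite !divpK ?dvdp_gcdl ?dvdp_gcdr // iso => /esym/eqP.
by rewrite !mulf_eq0 pstar_eq0 (negbTE g_neq0) => /eqP.
Qed.

Lemma isotropic_represents1 x1 y1 x2 y2 : hf x1 y1 x1 y1 = 0 ->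
    coprimep (hf x2 y2 x2 y2) (hf x1 y1 x2 y2 * pstar (hf x1 y1 x2 y2)) ->
  exists p r, hf p r p r = 1.
Proof.
set be := hf x1 y1 x2 y2; set de := hf x2 y2 x2 y2 => iso cop.
have sym_de : pstar de = de by rewrite -hfC.
have sym_N : pstar (be * pstar be) = be * pstar be by rewrite pstarM pstarK mulrC.
have [e [f [sym_e sym_f ef1 e0_neq0]]] := sym_bezout sym_de sym_N cop.
have [y [yy cop_y]] := sym_poly_norm sym_e.
have [z yz] := sym_trace_surj (cop_y e0_neq0) sym_f.
(* Its norm is f be be^* + e de, since y z + (y z)^* = f and y y^* = e. *)
exists (be * pstar z * x1 + y * x2), (be * pstar z * y1 + y * y2).
rewrite hform_expand iso (hfC x1 y1 x2 y2) -/be -/de -ef1 -yz -yy.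
clearbody be de; pstar_simpl; ring.
Qed.

Lemma hform_represents1 c00 c01 c10 c11 : a * d - b * pstar b != 0 ->
    c00 * a + c01 * b + c10 * pstar b + c11 * d = 1 ->
  exists p r, hf p r p r = 1.
Proof.
move=> D_neq0 unit_ideal.
have [x1 [y1 [k [l [iso kl1]]]]] := exists_primitive_isotropic.
have det1 : x1 * k - y1 * (- l) = 1 by rewrite -kl1; ring.
set be := hf x1 y1 (- l) k; set de := hf (- l) k (- l) k.
have Nbe : be * pstar be = - (a * d - b * pstar b).
  have := hform_gram_det a b d x1 y1 (- l) k.
  by rewrite det1 iso -hfC pstar1 !mul1r mul0r sub0r => /eqP; rewrite eqr_oppLR => /eqP.
have no_common_root x : root be x -> root (pstar be) x -> ~~ root de x.
  rewrite !rootE => /eqP be_x /eqP be'_x; apply/negP => /eqP de_x.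
  have h11 : (hf x1 y1 x1 y1).[x] = 0 by rewrite iso horner0.
  have h21 : (hf (- l) k x1 y1).[x] = 0 by rewrite hfC.
  have [a_x b_x b'_x d_x] := hform_basis_roots det1 h11 be_x h21 de_x.
  move/(congr1 (horner^~ x))/eqP: unit_ideal.
  by rewrite !hornerE a_x b_x b'_x d_x !mulr0 !addr0 eq_sym oner_eq0.
have Nbe_neq0 : be * pstar be != 0 by rewrite Nbe oppr_eq0.
have [c cop] := exists_shift_coprime Nbe_neq0 no_common_root.
apply: (@isotropic_represents1 x1 y1 (c%:P * x1 - l) (c%:P * y1 + k) iso).
have -> : hf x1 y1 (c%:P * x1 - l) (c%:P * y1 + k) = c%:P * hf x1 y1 x1 y1 + be.
  by rewrite /be /hform; pstar_simpl; ring.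
have -> : hf (c%:P * x1 - l) (c%:P * y1 + k) (c%:P * x1 - l) (c%:P * y1 + k)
    = c%:P * c%:P * hf x1 y1 x1 y1 + c%:P * (be + hf (- l) k x1 y1) + de.
  by rewrite /be /de /hform; pstar_simpl; ring.
by rewrite iso hfC !mulr0 !add0r.
Qed.

End Representation.

End ClosedField.

Lemma sum_ord2 (V : nmodType) (f : 'I_2 -> V) : \sum_(i < 2) f i = f 0 + f 1.
Proof. by rewrite big_ord_recl big_ord1; congr (f _ + f _); apply: val_inj. Qed.

Lemma det_mx2 (R : comNzRingType) (M : 'M[R]_2) : \det M = M 0 0 * M 1 1 - M 0 1 * M 1 0.
Proof.
rewrite (expand_det_row _ 0) sum_ord2 /cofactor !det_mx11 !mxE /=.
have -> : lift 0 0 = 1 :> 'I_2 by apply: val_inj.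
have -> : lift 1 0 = 0 :> 'I_2 by apply: val_inj.
by rewrite expr0 expr1 mul1r mulN1r mulrN.
Qed.

Lemma mulmx2E (R : pzRingType) (M N : 'M[R]_2) i j :
  (M *m N) i j = M i 0 * N 0 j + M i 1 * N 1 j.
Proof. by rewrite mxE sum_ord2. Qed.

Section HermitianMatrix.
Variable F : fieldType.
Variable A : 'M[{poly F}]_2.
Hypothesis A_herm : mxstar A = A.

Lemma hermitian_mx2E :
  [/\ pstar (A 0 0) = A 0 0, pstar (A 1 1) = A 1 1 & A 1 0 = pstar (A 0 1)].
Proof.
have AE i j : pstar (A j i) = A i j by rewrite -{2}A_herm mxE.
by rewrite !AE.
Qed.

Lemma mxstar_mulmx_hform (S : 'M_2) i j :
  (mxstar S *m A *m S) i j = hform (A 0 0) (A 0 1) (A 1 1) (S 0 i) (S 1 i) (S 0 j) (S 1 j).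
Proof.
have [_ _ A10] := hermitian_mx2E.
by rewrite !mulmx2E !mxE A10 /hform; ring.
Qed.

Lemma entries_gcd1_mx2 : entries_gcd1 A ->
  exists c00 c01 c10 c11, c00 * A 0 0 + c01 * A 0 1 + c10 * pstar (A 0 1) + c11 * A 1 1 = 1.
Proof.
have [_ _ A10] := hermitian_mx2E.
case=> C; rewrite !sum_ord2 A10 => C1.
by exists (C 0 0), (C 0 1), (C 1 0), (C 1 1); rewrite -C1; ring.
Qed.

End HermitianMatrix.

Theorem proposition3p1 (F : closedFieldType) (hF : 2%:R != 0 :> F)
  (A : 'M[{poly F}]_2) :
  mxstar A = A -> \det A != 0 -> entries_gcd1 A ->
  exists S : 'M[{poly F}]_2,
    S \in unitmx /\
    mxstar S *m A *m S = diag_mx (\row_(i < 2) if i == 0 then 1 else \det A).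
Proof.
move=> A_herm detA_neq0 /(entries_gcd1_mx2 A_herm) [c00 [c01 [c10 [c11 unit_ideal]]]].
have [sym_a sym_d A10] := hermitian_mx2E A_herm.
have detAE : \det A = A 0 0 * A 1 1 - A 0 1 * pstar (A 0 1) by rewrite det_mx2 A10.
rewrite detAE in detA_neq0 *.
have [p [r pr1]] := hform_represents1 hF sym_a sym_d detA_neq0 unit_ideal.
have [w1 [w2 [det1 orth norm]]] := hform_orthogonal_complement pr1.
exists (\matrix_(i, j) if j == 0 then (if i == 0 then p else r) else (if i == 0 then w1 else w2)).
split; first by rewrite unitmxE det_mx2 !mxE /= det1 unitr1.
apply/matrixP => i j; rewrite mxstar_mulmx_hform // !mxE.
case: i => [[|[|//]] ?]; case: j => [[|[|//]] ?]; rewrite /= ?mulr1n ?mulr0n //.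
by rewrite (hformC _ sym_a sym_d) orth rmorph0.
Qed.
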